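(* Let $(R,\cdot,\alpha)$ be a non-unital hom-associative ring, let $\sigma$ be a ring endomorphism of $R$ and $\delta$ a $\sigma$-derivation of $R$, and assume $\alpha\circ\delta=\delta\circ\alpha$ and $\alpha\circ\sigma=\sigma\circ\alpha$. Extend $\alpha$ homogeneously to $R[X;\sigma,\delta]$. Then $R[X;\sigma,\delta]$ is hom-associative with this twisting map.
   Context: A hom-associative ring is a triple $(R,\cdot,\alpha)$ where $R$ is an abelian group with a biadditive (not necessarily associative or unital) multiplication $\cdot$ and an additive map $\alpha\colon R\to R$ satisfying $\alpha(a)\cdot(b\cdot c)=(a\cdot b)\cdot\alpha(c)$ for all $a,b,c$. A $\sigma$-derivation is an additive map $\delta\colon R\to R$ with $\delta(a\cdot b)=\sigma(a)\cdot\delta(b)+\delta(a)\cdot b$ for all $a,b\in R$. $\mathbb{N}$ denotes the non-negative integers. For $m\in\mathbb{N}$ and $0\le i\le m$, $\pi_i^m\colon R\to R$ denotes the sum of all $\binom{m}{i}$ compositions of $i$ copies of $\sigma$ and $m-i$ copies of $\delta$ in arbitrary order ($\pi_0^0=\mathrm{id}_R$), and $\pi_i^m:=0$ if $i<0$ or $i>m$. The non-unital, non-associative Ore extension $R[X;\sigma,\delta]$ is the set of formal sums $\sum_{i\in\mathbb{N}}a_iX^i$ with $a_i\in R$, finitely many nonzero, with coefficientwise addition and the distributive multiplication determined by $aX^m\cdot bX^n=\sum_{i\in\mathbb{N}}(a\cdot\pi_i^m(b))X^{i+n}$. The homogeneous extension of $\alpha$ is $\alpha\left(\sum_ia_iX^i\right):=\sum_i\alpha(a_i)X^i$.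 Hom-associativity of $R[X;\sigma,\delta]$ means $\alpha(u)(vw)=(uv)\alpha(w)$ for all $u,v,w\in R[X;\sigma,\delta]$. *)

From HB Require Import structures.
From mathcomp Require Import all_boot all_order all_algebra.
Set Implicit Arguments. Unset Strict Implicit. Unset Printing Implicit Defensive.
Import GRing.Theory.
Local Open Scope ring_scope.

Section Ore.
Variable R : zmodType.

(* Composition of a word in {sigma, delta}: true = sigma, false = delta;
   the word [:: c1; ...; cm] denotes c1 o c2 o ... o cm. *)
Definition word_comp (sigma delta : R -> R) (w : seq bool) (b : R) : R :=
  foldr (fun (c : bool) (x : R) => if c then sigma x else delta x) b w.

(* pi_i^m(b): sum of all compositions of i copies of sigma and m-i copies
   of delta (in arbitrary order); it is 0 when i > m (empty sum). *)
Definition pi_ore (sigma delta : R -> R) (i m : nat) (b : R) : R :=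
  \sum_(w : m.-tuple bool | count id w == i) word_comp sigma delta w b.

(* Elements of R[X;sigma,delta] are represented by coefficient lists
   (u`_k is the coefficient of X^k); equality of elements is
   coefficientwise equality [ore_eq]. *)
Definition ore_coef (mul : R -> R -> R) (sigma delta : R -> R)
    (u v : seq R) (k : nat) : R :=
  \sum_(m < size u) \sum_(n < size v)
     (if (n <= k)%N then mul u`_m (pi_ore sigma delta (k - n) m v`_n) else 0).

Definition ore_mul (mul : R -> R -> R) (sigma delta : R -> R)
    (u v : seq R) : seq R :=
  mkseq (ore_coef mul sigma delta u v) (size u + size v).

Definition ore_alpha (alpha : R -> R) (u : seq R) : seq R := map alpha u.

Definition ore_eq (u v : seq R) : Prop := forall k : nat, u`_k = v`_k.

End Ore.

From HB Require Import structures.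
From mathcomp Require Import all_boot all_order all_algebra zify.
Set Implicit Arguments.
Unset Strict Implicit.
Unset Printing Implicit Defensive.
Import GRing.Theory.
Local Open Scope ring_scope.

(* The operators pi_i^m obey two rules: a Leibniz rule
   pi_j^l(b c) = sum_i pi_i^l(b) pi_j^i(c), coming from sigma being
   multiplicative and delta a sigma-derivation, and a composition rule
   pi_{k-q}^{a+b} = sum_n pi_{k-n}^a o pi_{n-q}^b, since a word of length a+b
   splits into its first a and last b letters.  Expanding the k-th coefficient
   of alpha(u) (v w) with the Leibniz rule, moving alpha across with
   hom-associativity of R and collapsing with the composition rule gives
   sum u_m pi_i^m(v_p) alpha(pi_{k-q}^{i+p}(w_q)), which is also the k-th
   coefficient of (u v) alpha(w) after the substitution m' = i + p. *)

Section AdditiveMap.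
Variables (U V : zmodType) (f : U -> V).
Hypothesis fD : {morph f : x y / x + y}.

Lemma additive_map0 : f 0 = 0.
Proof. by apply: (addrI (f 0)); rewrite -fD !addr0. Qed.

Lemma additive_map_sum I (r : seq I) (P : pred I) (F : I -> U) :
  f (\sum_(i <- r | P i) F i) = \sum_(i <- r | P i) f (F i).
Proof. exact: (big_morph f fD additive_map0). Qed.

End AdditiveMap.

Section BiadditiveMul.
Variables (R : zmodType) (mul : R -> R -> R).
Hypotheses (mulDl : forall a b c, mul (a + b) c = mul a c + mul b c)
           (mulDr : forall a b c, mul a (b + c) = mul a b + mul a c).

Lemma biadditive_mul0l c : mul 0 c = 0.
Proof. exact: (additive_map0 (fun a b => mulDl a b c)). Qed.

Lemma biadditive_mul0r c : mul c 0 = 0.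
Proof. exact: (additive_map0 (mulDr c)). Qed.

Lemma biadditive_mul_suml c I (r : seq I) (P : pred I) (F : I -> R) :
  mul (\sum_(i <- r | P i) F i) c = \sum_(i <- r | P i) mul (F i) c.
Proof. exact: (additive_map_sum (fun a b => mulDl a b c)). Qed.

Lemma biadditive_mul_sumr c I (r : seq I) (P : pred I) (F : I -> R) :
  mul c (\sum_(i <- r | P i) F i) = \sum_(i <- r | P i) mul c (F i).
Proof. exact: (additive_map_sum (mulDr c)). Qed.

End BiadditiveMul.

Section BigShift.
Variable R : zmodType.

Lemma big_ord_widen_vanish N B (F : nat -> R) : (N <= B)%N ->
    (forall i, (N <= i < B)%N -> F i = 0) ->
  \sum_(i < N) F i = \sum_(i < B) F i.
Proof.
move=> NB F0; rewrite (big_ord_widen _ _ NB) big_mkcond /=; apply: eq_bigr => i _.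
by case: ifP => // /negbT; rewrite -leqNgt => Ni; rewrite F0 // Ni ltn_ord.
Qed.

Lemma big_ord_shift B p (f : nat -> nat -> R) :
    (forall i, (i < B <= i + p)%N -> f i (i + p)%N = 0) ->
  \sum_(i < B) f i (i + p)%N =
  \sum_(m < B) (if (p <= m)%N then f (m - p)%N m else 0).
Proof.
move=> f0; rewrite -(big_mkord xpredT (fun i => f i (i + p)%N)).
rewrite -(big_mkord xpredT (fun m => if (p <= m)%N then f (m - p)%N m else 0)).
have [pB | Bp] := leqP p B; last first.
  rewrite [LHS]big_nat_cond [RHS]big_nat_cond.
  rewrite [LHS]big1 => [|i /andP [/andP [_ iB] _]]; last by apply: f0; lia.
  by rewrite big1 // => m /andP [/andP [_ mB] _]; case: ifP => //; lia.
rewrite [RHS](big_cat_nat (leq0n p) pB) /= [X in _ = X + _]big1_seq ?add0r; last first.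
  by move=> m /andP [_]; rewrite mem_index_iota => /andP [_ mp]; rewrite leqNgt mp.
rewrite -{2}[p]add0n big_addn.
rewrite [LHS](big_cat_nat (leq0n (B - p)) (leq_subr _ _)) /=.
rewrite [X in _ + X]big1_seq ?addr0 => [|i /andP [_]]; last first.
  by rewrite mem_index_iota => iB; apply: f0; lia.
by apply: eq_bigr => i _; rewrite leq_addl addnK.
Qed.

End BigShift.

Section PiOre.
Variables (R : zmodType) (sigma delta : R -> R).
Hypotheses (sigmaD : {morph sigma : a b / a + b})
           (deltaD : {morph delta : a b / a + b}).

Local Notation pi := (pi_ore sigma delta).
Local Notation sigma0 := (additive_map0 sigmaD).
Local Notation delta0 := (additive_map0 deltaD).

Lemma pi_ore_nil j x : pi j 0 x = if j == 0%N then x else 0.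
Proof.
rewrite /pi_ore; case: j => [|j] /=; last by rewrite big_pred0 // => t; rewrite tuple0.
by rewrite (eq_bigl (pred1 [tuple])) ?big_pred1_eq // => t; rewrite tuple0.
Qed.

(* Split off the outermost letter of the word. *)
Lemma pi_oreS j m x :
  pi j m.+1 x = (if j is j'.+1 then sigma (pi j' m x) else 0) + delta (pi j m x).
Proof.
rewrite /pi_ore.
pose cons_tuple (p : bool * m.-tuple bool) := [tuple of p.1 :: p.2].
have cons_bij : bijective cons_tuple.
  exists (fun t : m.+1.-tuple bool => (thead t, [tuple of behead t])).
    by case=> b t; congr pair; apply/val_inj.
  by move=> t; case: t / tupleP => b t; apply/val_inj.
rewrite (reindex cons_tuple); last exact: onW_bij.
rewrite -(pair_big_dep xpredT (fun b (t : m.-tuple bool) => count id (b :: t) == j)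
  (fun b t => word_comp sigma delta (b :: t) x)) big_bool /=.
rewrite (additive_map_sum deltaD); congr (_ + _).
case: j => [|j]; first by rewrite big_pred0.
by rewrite (additive_map_sum sigmaD); apply: eq_bigl => t; rewrite add1n eqSS.
Qed.

Lemma pi_oreD j m : {morph pi j m : x y / x + y}.
Proof.
move=> x y; elim: m j => [|m IH] j.
  by rewrite !pi_ore_nil; case: eqP; rewrite ?addr0.
rewrite !pi_oreS IH deltaD; case: j => [|j]; first by rewrite !add0r.
by rewrite IH sigmaD addrACA.
Qed.

Lemma pi_ore0 j m : pi j m 0 = 0.
Proof. exact: additive_map0 (pi_oreD j m). Qed.

Lemma pi_ore_gt j m x : (m < j)%N -> pi j m x = 0.
Proof.
elim: m j => [|m IH] [|j] //; first by rewrite pi_ore_nil.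
by move=> mj; rewrite pi_oreS !IH ?sigma0 ?delta0 ?addr0 // ltnW.
Qed.

Lemma pi_ore_addn B a b x k q : (q <= k < B)%N ->
  pi (k - q) (a + b) x =
  \sum_(n < B) (if (q <= n <= k)%N then pi (k - n) a (pi (n - q) b x) else 0).
Proof.
elim: a k => [|a IH] k /andP [qk kB].
  rewrite (bigD1 (Ordinal kB)) //= qk leqnn subnn pi_ore_nil /= big1 ?addr0 // => n nk.
  case: ifP => // /andP [_ nk']; rewrite pi_ore_nil subn_eq0 leqNgt ltn_neqAle nk' andbT.
  by case: eqP => // eq_nk; case/eqP: nk; apply: val_inj.
rewrite addSn pi_oreS.
have split_last (n : 'I_B) :
    (if (q <= n <= k)%N then pi (k - n) a.+1 (pi (n - q) b x) else 0) =
    (if (q <= n <= k)%N then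
       (if (k - n)%N is j.+1 then sigma (pi j a (pi (n - q) b x)) else 0) else 0)
    + delta (if (q <= n <= k)%N then pi (k - n) a (pi (n - q) b x) else 0).
  by rewrite pi_oreS; case: ifP; rewrite ?delta0 ?addr0.
rewrite (eq_bigr _ (fun n _ => split_last n)) {split_last}.
rewrite big_split /= -(additive_map_sum deltaD) -IH ?qk //; congr (_ + _).
case Ekq: (k - q)%N => [|j].
  rewrite big1 // => n _; case: ifP => // /andP [qn nk].
  by have -> : (k - n = 0)%N by lia.
case: k Ekq qk kB IH => [|k] Ekq qk kB IH; first by rewrite sub0n in Ekq.
have qk' : (q <= k)%N by lia.
have -> : j = (k - q)%N by lia.
rewrite (IH k) ?qk' ?(ltn_trans _ kB) // (additive_map_sum sigmaD); apply: eq_bigr => n _.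
case: (ltngtP n k.+1) => nk.
- by rewrite ltnS in nk; rewrite nk subSn //; case: ifP; rewrite ?sigma0.
- by rewrite [(n <= k)%N]leqNgt (ltnW nk) /= andbF sigma0.
- by rewrite nk ltnn andbF subnn sigma0; case: ifP.
Qed.

Section Leibniz.
Variable mul : R -> R -> R.
Hypotheses (mulDl : forall a b c, mul (a + b) c = mul a c + mul b c)
           (mulDr : forall a b c, mul a (b + c) = mul a b + mul a c)
           (sigmaM : forall a b, sigma (mul a b) = mul (sigma a) (sigma b))
           (deltaM : forall a b,
              delta (mul a b) = mul (sigma a) (delta b) + mul (delta a) b).

Local Notation mul0l := (biadditive_mul0l mulDl).
Local Notation mul0r := (biadditive_mul0r mulDr).

Lemma pi_ore_mul B j l b c : (l < B)%N ->
  pi j l (mul b c) = \sum_(i < B) mul (pi i l b) (pi j i c).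
Proof.
elim: l j => [|l IH] j lB.
  rewrite (bigD1 (Ordinal lB)) //= big1 ?addr0 => [|i /eqP ni].
    by rewrite !pi_ore_nil; case: eqP; rewrite ?mul0r.
  by rewrite pi_ore_nil; case: eqP => [i0|]; [case: ni; apply: val_inj | rewrite mul0l].
case: B lB IH => [|B] // lB IH.
rewrite pi_oreS (IH j) ?(ltn_trans _ lB) // (additive_map_sum deltaD).
under eq_bigr do rewrite deltaM.
under [RHS]eq_bigr do rewrite pi_oreS mulDl.
rewrite !big_split /= addrA; congr (_ + _).
rewrite [RHS]big_ord_recl /= mul0l add0r.
under [RHS]eq_bigr do rewrite /bump add1n pi_oreS mulDr.
rewrite big_split /= [X in _ + X = _]big_ord_recr /= (@pi_ore_gt B l) //.
rewrite sigma0 mul0l addr0; congr (_ + _).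
case: j => [|j]; first by rewrite big1 // => i _; rewrite mul0r.
rewrite (IH j) ?(ltnW lB) // big_ord_recr /= (@pi_ore_gt B l) // mul0l addr0.
by rewrite (additive_map_sum sigmaD); apply: eq_bigr => i _; rewrite sigmaM.
Qed.

End Leibniz.

Lemma pi_ore_comm (alpha : R -> R) : {morph alpha : a b / a + b} ->
    (forall a, alpha (sigma a) = sigma (alpha a)) ->
    (forall a, alpha (delta a) = delta (alpha a)) ->
  forall j m x, alpha (pi j m x) = pi j m (alpha x).
Proof.
move=> alphaD alpha_sigma alpha_delta j m x.
elim: m j => [|m IH] j; first by rewrite !pi_ore_nil; case: eqP; rewrite ?additive_map0.
rewrite !pi_oreS alphaD alpha_delta IH; case: j => [|j]; first by rewrite additive_map0.
by rewrite alpha_sigma IH.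
Qed.

End PiOre.

Section OreHomAssoc.
Variables (R : zmodType) (mul : R -> R -> R) (alpha sigma delta : R -> R).
Hypotheses (mulDl : forall a b c, mul (a + b) c = mul a c + mul b c)
           (mulDr : forall a b c, mul a (b + c) = mul a b + mul a c)
           (alphaD : {morph alpha : a b / a + b})
           (homA : forall a b c, mul (alpha a) (mul b c) = mul (mul a b) (alpha c))
           (sigmaD : {morph sigma : a b / a + b})
           (sigmaM : forall a b, sigma (mul a b) = mul (sigma a) (sigma b))
           (deltaD : {morph delta : a b / a + b})
           (deltaM : forall a b,
              delta (mul a b) = mul (sigma a) (delta b) + mul (delta a) b)
           (alpha_delta : forall a, alpha (delta a) = delta (alpha a))
           (alpha_sigma : forall a, alpha (sigma a) = sigma (alpha a)).

Local Notation pi := (pi_ore sigma delta).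
Local Notation omul := (ore_mul mul sigma delta).
Local Notation mul0l := (biadditive_mul0l mulDl).
Local Notation mul0r := (biadditive_mul0r mulDr).
Local Notation pi0 := (pi_ore0 sigmaD deltaD).
Local Notation mul_suml := (biadditive_mul_suml mulDl).
Local Notation mul_sumr := (biadditive_mul_sumr mulDr).

Lemma nth_ore_alpha (u : seq R) m : (ore_alpha alpha u)`_m = alpha u`_m.
Proof.
have [mu | um] := ltnP m (size u); first exact: nth_map.
by rewrite !nth_default ?size_map // additive_map0.
Qed.

Lemma nth_ore_mul (u v : seq R) k B : (size u <= B)%N -> (size v <= B)%N ->
  (omul u v)`_k =
  \sum_(m < B) \sum_(n < B) (if (n <= k)%N then mul u`_m (pi (k - n) m v`_n) else 0).
Proof.
move=> uB vB; have [kuv | uvk] := ltnP k (size u + size v); last first.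
  rewrite nth_default ?size_mkseq // big1 // => m _; rewrite big1 // => n _.
  case: ifP => // nk; have [mu | um] := ltnP m (size u); last first.
    by rewrite nth_default // mul0l.
  have [nv | vn] := ltnP n (size v); last by rewrite [v`_n]nth_default // pi0 mul0r.
  by rewrite pi_ore_gt ?mul0r //; lia.
pose coef m n := if (n <= k)%N then mul u`_m (pi (k - n) m v`_n) else 0.
rewrite nth_mkseq // /ore_coef -/coef.
rewrite (big_ord_widen_vanish (F := fun m => \sum_(n < size v) coef m n) uB).
  apply: eq_bigr => m _; apply: (big_ord_widen_vanish (F := coef m) vB) => n /andP [vn _].
  by rewrite /coef [v`_n]nth_default // pi0 mul0r; case: ifP.
move=> m /andP [um _]; rewrite big1 // => n _.
by rewrite /coef nth_default // mul0l; case: ifP.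
Qed.

Definition ore_assoc_coef (u v w : seq R) k B :=
  \sum_(m < B) \sum_(p < B) \sum_(q < B) \sum_(i < B)
    (if (q <= k)%N then mul (mul u`_m (pi i m v`_p)) (pi (k - q) (i + p) (alpha w`_q))
     else 0).

Section Coefficient.
Variables (u v w : seq R) (k B : nat).
Hypotheses (uvwB : (size u + size v + size w <= B)%N) (kB : (k < B)%N).

Lemma nth_ore_mul_alpha_l :
  (omul (ore_alpha alpha u) (omul v w))`_k = ore_assoc_coef u v w k B.
Proof.
have uB : (size u <= B)%N by lia.
have vB : (size v <= B)%N by lia.
have wB : (size w <= B)%N by lia.
have vwB : (size v + size w <= B)%N by lia.
rewrite (@nth_ore_mul _ _ _ B) ?size_map ?size_iota // /ore_assoc_coef.
apply: eq_bigr => m _.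
transitivity (\sum_(n < B) \sum_(p < B) \sum_(q < B) \sum_(i < B)
    (if (q <= n <= k)%N then
       mul (mul u`_m (pi i m v`_p)) (pi (k - n) i (pi (n - q) p (alpha w`_q)))
     else 0)).
  apply: eq_bigr => n _; rewrite (@nth_ore_mul _ _ _ B) //.
  case: ifP => nk; last by symmetry; do 3! (rewrite big1 // => ? _); rewrite andbF.
  rewrite (additive_map_sum (pi_oreD sigmaD deltaD _ _)) mul_sumr.
  apply: eq_bigr => p _.
  rewrite (additive_map_sum (pi_oreD sigmaD deltaD _ _)) mul_sumr.
  apply: eq_bigr => q _; rewrite andbT; case: ifP => qn; last by rewrite pi0 mul0r big1.
  rewrite (pi_ore_mul sigmaD deltaD mulDl mulDr sigmaM deltaM (B := B)) //.
  rewrite mul_sumr; apply: eq_bigr => i _.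
  by rewrite nth_ore_alpha homA !(pi_ore_comm sigmaD deltaD alphaD).
rewrite exchange_big; apply: eq_bigr => p _.
rewrite exchange_big; apply: eq_bigr => q _.
rewrite exchange_big; apply: eq_bigr => i _.
case: ifP => qk; last first.
  by rewrite big1 // => n _; case: ifP => // /andP [qn nk]; rewrite (leq_trans qn nk) in qk.
rewrite (pi_ore_addn sigmaD deltaD (B := B)) ?qk // [RHS]mul_sumr.
by apply: eq_bigr => n _; case: ifP; rewrite ?mul0r.
Qed.

Lemma nth_ore_mul_alpha_r :
  (omul (omul u v) (ore_alpha alpha w))`_k = ore_assoc_coef u v w k B.
Proof.
have uB : (size u <= B)%N by lia.
have vB : (size v <= B)%N by lia.
have wB : (size w <= B)%N by lia.
have uvB : (size u + size v <= B)%N by lia.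
rewrite (@nth_ore_mul _ _ _ B) ?size_map ?size_iota //.
transitivity (\sum_(m' < B) \sum_(q < B) \sum_(m < B) \sum_(p < B)
   (if (p <= m')%N then
      (if (q <= k)%N then
         mul (mul u`_m (pi (m' - p) m v`_p)) (pi (k - q) m' (alpha w`_q)) else 0)
    else 0)).
  apply: eq_bigr => m' _; apply: eq_bigr => q _.
  case: ifP => qk; last by symmetry; do 2! (rewrite big1 // => ? _); case: ifP.
  rewrite (@nth_ore_mul _ _ _ B) // nth_ore_alpha.
  rewrite mul_suml; apply: eq_bigr => m _.
  rewrite mul_suml; apply: eq_bigr => p _.
  by case: ifP; rewrite ?mul0l.
rewrite /ore_assoc_coef.
under eq_bigr => m' _ do rewrite exchange_big.
under eq_bigr => m' _ do under eq_bigr => m _ do rewrite exchange_big.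
rewrite exchange_big; apply: eq_bigr => m _.
rewrite exchange_big; apply: eq_bigr => p _.
rewrite exchange_big; apply: eq_bigr => q _.
symmetry; apply: (big_ord_shift (f := fun i m' => if (q <= k)%N then
  mul (mul u`_m (pi i m v`_p)) (pi (k - q) m' (alpha w`_q)) else 0)).
move=> i /andP [iB Bip]; case: ifP => // _.
have [mu | um] := ltnP m (size u); last by rewrite nth_default // !mul0l.
have [pv | vp] := ltnP p (size v); last by rewrite [v`_p]nth_default // pi0 mul0r mul0l.
by rewrite pi_ore_gt ?mul0r ?mul0l //; lia.
Qed.

End Coefficient.

End OreHomAssoc.

Theorem mainTheorem8 (R : zmodType) (mul : R -> R -> R)
  (alpha sigma delta : R -> R)
  (mulDl : forall a b c, mul (a + b) c = mul a c + mul b c)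
  (mulDr : forall a b c, mul a (b + c) = mul a b + mul a c)
  (alphaD : forall a b, alpha (a + b) = alpha a + alpha b)
  (homA : forall a b c, mul (alpha a) (mul b c) = mul (mul a b) (alpha c))
  (sigmaD : forall a b, sigma (a + b) = sigma a + sigma b)
  (sigmaM : forall a b, sigma (mul a b) = mul (sigma a) (sigma b))
  (deltaD : forall a b, delta (a + b) = delta a + delta b)
  (deltaM : forall a b, delta (mul a b) = mul (sigma a) (delta b) + mul (delta a) b)
  (alpha_delta : forall a, alpha (delta a) = delta (alpha a))
  (alpha_sigma : forall a, alpha (sigma a) = sigma (alpha a)) :
  forall u v w : seq R,
    ore_eq (ore_mul mul sigma delta (ore_alpha alpha u) (ore_mul mul sigma delta v w))
           (ore_mul mul sigma delta (ore_mul mul sigma delta u v) (ore_alpha alpha w)).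
Proof.
move=> u v w k.
pose B := (size u + size v + size w + k.+1)%N.
have uvwB : (size u + size v + size w <= B)%N by rewrite /B; lia.
have kB : (k < B)%N by rewrite /B; lia.
rewrite (nth_ore_mul_alpha_l mulDl mulDr alphaD homA sigmaD sigmaM deltaD deltaM
  alpha_delta alpha_sigma uvwB kB).
by rewrite (nth_ore_mul_alpha_r mulDl mulDr alphaD sigmaD deltaD uvwB kB).
Qed.
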